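(* Let $(\mathfrak{g},[\cdot,\cdot]_{\mathfrak{g}},\phi_{\mathfrak{g}})$ and $(\mathfrak{g}^*,[\cdot,\cdot]_{\mathfrak{g}^*},\phi_{\mathfrak{g}}^* )$ be two weakly involutive Hom-Lie algebras, where $\mathfrak{g}$ is finite-dimensional, $\mathfrak g^*$ is its dual space and $\phi_{\mathfrak{g}}^*$ is the dual map of $\phi_{\mathfrak{g}}$. Define $\Delta:\mathfrak{g}\to\mathfrak{g}\otimes\mathfrak{g}$ by $\langle \Delta(x),a\otimes b\rangle=\langle x,[a,b]_{\mathfrak{g}^*}\rangle$. Then the following conditions are equivalent: (i) $(\mathfrak{g},\mathfrak{g}^* )$ is a Hom-Lie bialgebra, i.e. $\Delta([x,y]_{\mathfrak{g}})=\mathrm{ad}_{\phi_{\mathfrak{g}}(x)}\Delta(y)-\mathrm{ad}_{\phi_{\mathfrak{g}}(y)}\Delta(x)$ for all $x,y\in\mathfrak{g}$; (ii) $(\mathfrak{g},\mathfrak{g}^*;\mathrm{ad}^\circ,\mathfrak{ad}^\circ)$ is a matched pair of Hom-Lie algebras; (iii) $(\mathfrak{g}\oplus\mathfrak{g}^*;\mathfrak{g},\mathfrak{g}^* )$ is a Manin triple of Hom-Lie algebras associated to the bilinear form $\mathfrak{B}(x+a,y+b)=\langle x,b\rangle+\langle y,a\rangle$ ($x,y\in\mathfrak g$, $a,b\in\mathfrak g^*$).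
   Context: A Hom-Lie algebra $(\mathfrak{h},[\cdot,\cdot]_{\mathfrak{h}},\phi_{\mathfrak{h}})$ is a vector space $\mathfrak h$ with a skew-symmetric bilinear map $[\cdot,\cdot]_{\mathfrak h}$ and a linear map $\phi_{\mathfrak h}$ satisfying $\phi_{\mathfrak h}[x,y]_{\mathfrak h}=[\phi_{\mathfrak h}(x),\phi_{\mathfrak h}(y)]_{\mathfrak h}$ and the Hom-Jacobi identity $[\phi_{\mathfrak h}(x),[y,z]_{\mathfrak h}]_{\mathfrak h}+[\phi_{\mathfrak h}(y),[z,x]_{\mathfrak h}]_{\mathfrak h}+[\phi_{\mathfrak h}(z),[x,y]_{\mathfrak h}]_{\mathfrak h}=0$. It is weakly involutive if $[\phi_{\mathfrak h}^2(x),y]_{\mathfrak h}=[x,y]_{\mathfrak h}$ for all $x,y$. A representation $(V,\beta,\rho)$ of $\mathfrak h$ is a vector space $V$, $\beta\in\mathfrak{gl}(V)$ and a linear map $\rho:\mathfrak h\to\mathfrak{gl}(V)$ with $\rho(\phi_{\mathfrak h}(x))\beta=\beta\rho(x)$ and $\rho([x,y]_{\mathfrak h})\beta=\rho(\phi_{\mathfrak h}(x))\rho(y)-\rho(\phi_{\mathfrak h}(y))\rho(x)$. The adjoint representation is $(\mathfrak h,\phi_{\mathfrak h},\mathrm{ad})$, $\mathrm{ad}_x y=[x,y]_{\mathfrak h}$. For $z\in\mathfrak g$ and $t\in\mathfrak g\otimes\mathfrak g$, $\mathrm{ad}_z t:=(\mathrm{ad}_z\otimes\phi_{\mathfrak g}+\phi_{\mathfrak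 g}\otimes \mathrm{ad}_z)t$. Here $\mathrm{ad}^\circ:\mathfrak g\to\mathfrak{gl}(\mathfrak g^* )$ is given by $\langle \mathrm{ad}^\circ_x a,y\rangle=-\langle a,[\phi_{\mathfrak g}(x),y]_{\mathfrak g}\rangle$ and $\mathfrak{ad}^\circ:\mathfrak g^*\to\mathfrak{gl}(\mathfrak g)$ is given by $\langle \mathfrak{ad}^\circ_a x,b\rangle=-\langle x,[\phi_{\mathfrak g}^*(a),b]_{\mathfrak g^*}\rangle$. A matched pair of Hom-Lie algebras $(\mathfrak g,\mathfrak g';\rho,\rho')$ consists of Hom-Lie algebras $(\mathfrak g,[\cdot,\cdot]_{\mathfrak g},\phi_{\mathfrak g})$, $(\mathfrak g',[\cdot,\cdot]_{\mathfrak g'},\phi_{\mathfrak g'})$, a representation $(\mathfrak g',\phi_{\mathfrak g'},\rho)$ of $\mathfrak g$ and a representation $(\mathfrak g,\phi_{\mathfrak g},\rho')$ of $\mathfrak g'$ such that for all $x,y\in\mathfrak g$, $x',y'\in\mathfrak g'$: $\rho'(\phi_{\mathfrak g'}(x'))[x,y]_{\mathfrak g}=[\rho'(x')x,\phi_{\mathfrak g}(y)]_{\mathfrak g}+[\phi_{\mathfrak g}(x),\rho'(x')y]_{\mathfrak g}+\rho'(\rho(y)x')\phi_{\mathfrak g}(x)-\rho'(\rho(x)x')\phi_{\mathfrak g}(y)$ and $\rho(\phi_{\mathfrak g}(x))[x',y']_{\mathfrak g'}=[\rho(x)x',\phi_{\mathfrak g'}(y')]_{\mathfrak g'}+[\phi_{\mathfrak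 g'}(x'),\rho(x)y']_{\mathfrak g'}+\rho(\rho'(y')x)\phi_{\mathfrak g'}(x')-\rho(\rho'(x')x)\phi_{\mathfrak g'}(y')$. A bilinear form $\mathfrak B$ on a Hom-Lie algebra $(\mathfrak k,[\cdot,\cdot]_{\mathfrak k},\phi_{\mathfrak k})$ is invariant if $\mathfrak B([x,y]_{\mathfrak k},z)=\mathfrak B(x,[\phi_{\mathfrak k}(y),z]_{\mathfrak k})$ and $\mathfrak B(\phi_{\mathfrak k}(x),y)=\mathfrak B(x,\phi_{\mathfrak k}(y))$ for all $x,y,z$. A Manin triple of Hom-Lie algebras $(\mathfrak k;\mathfrak g,\mathfrak g')$ is a Hom-Lie algebra $\mathfrak k$ with a nondegenerate symmetric invariant bilinear form $\mathfrak B$ such that $\mathfrak g,\mathfrak g'$ are isotropic Hom-Lie subalgebras of $\mathfrak k$ (subspaces closed under the bracket and stable under $\phi_{\mathfrak k}$, with the induced structures being the given Hom-Lie algebra structures) and $\mathfrak k=\mathfrak g\oplus\mathfrak g'$ as vector spaces. *)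

From HB Require Import structures.
From mathcomp Require Import all_boot all_order all_algebra.
Set Implicit Arguments. Unset Strict Implicit. Unset Printing Implicit Defensive.
Import GRing.Theory.
Local Open Scope ring_scope.

Section HomLie.
Variable K : fieldType.

Definition HomLie (V : lmodType K) (br : V -> V -> V) (phi : V -> V) : Prop :=
  [/\ (forall (c : K) x y z, br (c *: x + y) z = c *: br x z + br y z)
      /\ (forall (c : K) x y z, br x (c *: y + z) = c *: br x y + br x z),
      (forall x y, br x y = - br y x),
      (forall (c : K) x y, phi (c *: x + y) = c *: phi x + phi y),
      (forall x y, phi (br x y) = br (phi x) (phi y)) &
      (forall x y z, br (phi x) (br y z) + br (phi y) (br z x)
                     + br (phi z) (br x y) = 0)].

Definition weakly_involutive (V : lmodType K) (br : V -> V -> V) (phi : V -> V)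
  : Prop := forall x y, br (phi (phi x)) y = br x y.

Definition HomLieRep (V W : lmodType K) (br : V -> V -> V) (phi : V -> V)
    (beta : W -> W) (rho : V -> W -> W) : Prop :=
  [/\ (forall (c : K) w w', beta (c *: w + w') = c *: beta w + beta w'),
      (forall (c : K) x y w, rho (c *: x + y) w = c *: rho x w + rho y w),
      (forall (c : K) x w w', rho x (c *: w + w') = c *: rho x w + rho x w'),
      (forall x w, rho (phi x) (beta w) = beta (rho x w)) &
      (forall x y w, rho (br x y) (beta w)
                     = rho (phi x) (rho y w) - rho (phi y) (rho x w))].

Definition matched_pair (G G' : lmodType K)
    (br : G -> G -> G) (phi : G -> G) (br' : G' -> G' -> G') (phi' : G' -> G')
    (rho : G -> G' -> G') (rho' : G' -> G -> G) : Prop :=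
  [/\ HomLie br phi, HomLie br' phi',
      HomLieRep br phi phi' rho, HomLieRep br' phi' phi rho' &
      (forall x y x', rho' (phi' x') (br x y)
         = br (rho' x' x) (phi y) + br (phi x) (rho' x' y)
           + rho' (rho y x') (phi x) - rho' (rho x x') (phi y)) /\
      (forall x x' y', rho (phi x) (br' x' y')
         = br' (rho x x') (phi' y') + br' (phi' x') (rho x y')
           + rho (rho' y' x) (phi' x') - rho (rho' x' x) (phi' y'))].

(** Manin triple (g (+) g'; g, g') of Hom-Lie algebras: the Hom-Lie algebra
    k = G * G' with bracket brk and twist phik, and bilinear form B;
    g = G * 0 and g' = 0 * G' are isotropic Hom-Lie subalgebras carrying
    the given structures. *)
Definition manin_triple (G G' : lmodType K)
    (br : G -> G -> G) (phi : G -> G) (br' : G' -> G' -> G') (phi' : G' -> G')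
    (brk : (G * G')%type -> (G * G')%type -> (G * G')%type)
    (phik : (G * G')%type -> (G * G')%type)
    (B : (G * G')%type -> (G * G')%type -> K) : Prop :=
  [/\ HomLie br phi /\ HomLie br' phi', HomLie brk phik,
      [/\ (forall (c : K) u v w, B (c *: u + v) w = c * B u w + B v w),
          (forall (c : K) u v w, B u (c *: v + w) = c * B u v + B u w)
          /\ (forall u v, B u v = B v u),
          (forall u, (forall v, B u v = 0) -> u = 0),
          (forall u v w, B (brk u v) w = B u (brk (phik v) w)) &
          (forall u v, B (phik u) v = B u (phik v))],
      [/\ (forall x y : G, B (x, 0) (y, 0) = 0),
          (forall x y : G, brk (x, 0) (y, 0) = (br x y, 0)) &
          (forall x : G, phik (x, 0) = (phi x, 0))] &
      [/\ (forall a b : G', B (0, a) (0, b) = 0),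
          (forall a b : G', brk (0, a) (0, b) = (0, br' a b)) &
          (forall a : G', phik (0, a) = (0, phi' a))]].

(** Concrete finite-dimensional model: g = K^n as row vectors, g^* = K^n
    with the standard pairing, g (x) g = n x n matrices, x (x) y = x^T y. *)
Variable n : nat.
Notation V := 'rV[K]_n.

Definition pairing (x a : V) : K := \sum_(i < n) x 0 i * a 0 i.
Definition ev (i : 'I_n) : V := delta_mx 0 i.

(** dual map phi^* : <x, phi^* a> = <phi x, a> *)
Definition dual_map (phi : V -> V) : V -> V :=
  fun a => \row_j pairing (phi (ev j)) a.

(** (f (x) h) t for t in g (x) g *)
Definition tensor_map (f h : V -> V) (t : 'M[K]_n) : 'M[K]_n :=
  \sum_(i < n) \sum_(j < n) t i j *: ((f (ev i))^T *m h (ev j)).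

Definition ad_tensor (br : V -> V -> V) (phi : V -> V) (z : V) (t : 'M[K]_n)
  : 'M[K]_n := tensor_map (br z) phi t + tensor_map phi (br z) t.

Definition cobracket (brd : V -> V -> V) (x : V) : 'M[K]_n :=
  \matrix_(i, j) pairing x (brd (ev i) (ev j)).

Definition hom_lie_bialgebra (br : V -> V -> V) (phi : V -> V)
    (brd : V -> V -> V) : Prop :=
  forall x y, cobracket brd (br x y)
    = ad_tensor br phi (phi x) (cobracket brd y)
      - ad_tensor br phi (phi y) (cobracket brd x).

Definition coad (br : V -> V -> V) (phi : V -> V) (x a : V) : V :=
  \row_j - pairing a (br (phi x) (ev j)).

Definition coad_dual (phi : V -> V) (brd : V -> V -> V) (a x : V) : V :=
  \row_j - pairing x (brd (dual_map phi a) (ev j)).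

Definition standard_form (u v : (V * V)%type) : K :=
  pairing u.1 v.2 + pairing v.1 u.2.

End HomLie.

(* All three conditions reduce to the vanishing of one scalar quantity
   Q(x, y, a, b): the bialgebra condition paired with a (x) b and written
   through the coadjoint actions.  The map phi^* enters only through the
   adjunction <phi x, a> = <x, phi^* a>, so everything is symmetric under
   exchanging (g, phi) and (g^*, phi^* ), and Q is invariant under this exchange.
   Entrywise, the bialgebra condition is Q = 0 on basis tensors.  Paired with b,
   the first matched-pair compatibility is Q = 0, hence so is the second by
   symmetry; the representation axioms hold by weak involutivity alone.  On
   g (+) g^*, invariance and isotropy of the standard form force the bracket of
   a Manin triple to be the double bracket, whose Hom-Jacobiator on (x, y, a)
   and on (x, a, b) is exactly the defect of the two compatibilities. *)

From HB Require Import structures.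
From mathcomp Require Import all_boot all_order all_algebra.
From mathcomp Require Import ring.
Set Implicit Arguments. Unset Strict Implicit. Unset Printing Implicit Defensive.
Import GRing.Theory.
Local Open Scope ring_scope.

Section LinearMaps.
Variables (R : pzRingType) (U W : lmodType R) (f : U -> W).
Hypothesis f_lin : linear f.

Let fL : {linear U -> W} := HB.pack f (GRing.isLinear.Build R U W *:%R f f_lin).

Lemma lin0 : f 0 = 0. Proof. exact: raddf0 fL. Qed.
Lemma linD x y : f (x + y) = f x + f y. Proof. exact: raddfD fL x y. Qed.
Lemma linN x : f (- x) = - f x. Proof. exact: raddfN fL x. Qed.
Lemma linZ c x : f (c *: x) = c *: f x. Proof. exact: linearZZ fL c x. Qed.

End LinearMaps.

Section HomLieFacts.
Variables (K : fieldType) (V : lmodType K) (br : V -> V -> V) (phi : V -> V).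
Hypothesis HL : HomLie br phi.

Lemma br_linl z : linear (br^~ z).
Proof. by case: HL => [[H _] _ _ _ _] c x y; apply: H. Qed.
Lemma br_linr x : linear (br x).
Proof. by case: HL => [[_ H] _ _ _ _] c y z; apply: H. Qed.
Lemma br_anti x y : br x y = - br y x.
Proof. by case: HL => [_ H _ _ _]; apply: H. Qed.
Lemma phi_lin : linear phi.
Proof. by case: HL => [_ _ H _ _]; apply: H. Qed.
Lemma phi_br x y : phi (br x y) = br (phi x) (phi y).
Proof. by case: HL => [_ _ _ H _]; apply: H. Qed.
Lemma br_jacobi x y z :
  br (phi x) (br y z) + br (phi y) (br z x) + br (phi z) (br x y) = 0.
Proof. by case: HL => [_ _ _ _ H]; apply: H. Qed.

Lemma br0l y : br 0 y = 0. Proof. exact: lin0 (br_linl y). Qed.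
Lemma br0r x : br x 0 = 0. Proof. exact: lin0 (br_linr x). Qed.
Lemma brDl x y z : br (x + y) z = br x z + br y z. Proof. exact: linD (br_linl z) x y. Qed.
Lemma brDr x y z : br x (y + z) = br x y + br x z. Proof. exact: linD (br_linr x) y z. Qed.
Lemma brNl x y : br (- x) y = - br x y. Proof. exact: linN (br_linl y) x. Qed.
Lemma brNr x y : br x (- y) = - br x y. Proof. exact: linN (br_linr x) y. Qed.
Lemma brZl c x y : br (c *: x) y = c *: br x y. Proof. exact: linZ (br_linl y) c x. Qed.
Lemma brZr c x y : br x (c *: y) = c *: br x y. Proof. exact: linZ (br_linr x) c y. Qed.
Lemma phi0 : phi 0 = 0. Proof. exact: lin0 phi_lin. Qed.
Lemma phiD x y : phi (x + y) = phi x + phi y. Proof. exact: linD phi_lin x y. Qed.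
Lemma phiN x : phi (- x) = - phi x. Proof. exact: linN phi_lin x. Qed.
Lemma phiZ c x : phi (c *: x) = c *: phi x. Proof. exact: linZ phi_lin c x. Qed.

End HomLieFacts.

Section Pairing.
Variables (K : fieldType) (n : nat).
Local Notation V := 'rV[K]_n.
Local Notation ev := (ev K).

Lemma pairingC (x a : V) : pairing x a = pairing a x.
Proof. by apply: eq_bigr => i _; rewrite mulrC. Qed.

Lemma pairingDl (x y a : V) : pairing (x + y) a = pairing x a + pairing y a.
Proof. by rewrite /pairing -big_split; apply: eq_bigr => i _; rewrite mxE mulrDl. Qed.
Lemma pairingZl c (x a : V) : pairing (c *: x) a = c * pairing x a.
Proof. by rewrite /pairing mulr_sumr; apply: eq_bigr => i _; rewrite mxE mulrA. Qed.
Lemma pairingNl (x a : V) : pairing (- x) a = - pairing x a.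
Proof. by rewrite -scaleN1r pairingZl mulN1r. Qed.
Lemma pairing0l (a : V) : pairing 0 a = 0.
Proof. by rewrite -(scale0r 0) pairingZl mul0r. Qed.

Lemma pairingDr (x a b : V) : pairing x (a + b) = pairing x a + pairing x b.
Proof. by rewrite !(pairingC x) pairingDl. Qed.
Lemma pairingZr c (x a : V) : pairing x (c *: a) = c * pairing x a.
Proof. by rewrite !(pairingC x) pairingZl. Qed.
Lemma pairingNr (x a : V) : pairing x (- a) = - pairing x a.
Proof. by rewrite !(pairingC x) pairingNl. Qed.
Lemma pairing0r (x : V) : pairing x 0 = 0.
Proof. by rewrite pairingC pairing0l. Qed.

Lemma pairing_ev (x : V) j : pairing x (ev j) = x 0 j.
Proof.
rewrite /pairing (bigD1 j) //= big1 => [|i /negbTE nij]; rewrite /ev !mxE.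
  by rewrite !eqxx mulr1 addr0.
by rewrite nij andbF mulr0.
Qed.

Lemma pairing_inj (u v : V) : (forall b, pairing u b = pairing v b) -> u = v.
Proof. by move=> uv; apply/rowP => j; rewrite -!pairing_ev. Qed.

Lemma scalar_expand (f : V -> K) : scalar f -> forall y, f y = \sum_j y 0 j * f (ev j).
Proof.
move=> f_scalar y.
pose fL : {scalar V} := HB.pack f (GRing.isLinear.Build K _ _ *%R f f_scalar).
rewrite [LHS](_ : _ = fL y) // {1}(row_sum_delta y) linear_sum.
by apply: eq_bigr => j _; rewrite linearZ.
Qed.

Lemma pairing_row_ev (f : V -> K) y : scalar f -> pairing (\row_j f (ev j)) y = f y.
Proof.
move=> f_scalar; rewrite (scalar_expand f_scalar).
by apply: eq_bigr => j _; rewrite mxE mulrC.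
Qed.

Definition adjoint (phi psi : V -> V) := forall x a, pairing (phi x) a = pairing x (psi a).

Lemma adjointC phi psi : adjoint phi psi -> adjoint psi phi.
Proof. by move=> adj a x; rewrite pairingC -adj pairingC. Qed.

Lemma dual_map_adjoint phi : linear phi -> adjoint phi (dual_map phi).
Proof.
move=> phi_lin x a.
have phi_a_scalar : scalar (fun x => pairing (phi x) a).
  by move=> c u v /=; rewrite linD // linZ // pairingDl pairingZl.
by rewrite [RHS]pairingC (pairing_row_ev _ phi_a_scalar).
Qed.

End Pairing.

Section Coadjoint.
Variables (K : fieldType) (n : nat).
Local Notation V := 'rV[K]_n.
Variables (br : V -> V -> V) (phi : V -> V).
Hypothesis HL : HomLie br phi.
Local Notation c := (coad br phi).

Lemma pairing_coad x a y : pairing (c x a) y = - pairing a (br (phi x) y).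
Proof.
have ad_scalar : scalar (fun y => - pairing a (br (phi x) y)).
  by move=> k u v /=; rewrite (brDr HL) (brZr HL) pairingDr pairingZr opprD mulrN.
by rewrite (pairing_row_ev _ ad_scalar).
Qed.

Lemma coad_linl a : linear (c^~ a).
Proof.
move=> k x y; apply: pairing_inj => z.
by rewrite pairingDl pairingZl !pairing_coad (phiD HL) (phiZ HL) (brDl HL) (brZl HL)
  pairingDr pairingZr opprD mulrN.
Qed.

Lemma coad_linr x : linear (c x).
Proof.
move=> k a b; apply: pairing_inj => z.
by rewrite pairingDl pairingZl !pairing_coad pairingDl pairingZl opprD mulrN.
Qed.

Lemma coad0l a : c 0 a = 0. Proof. exact: lin0 (coad_linl a). Qed.
Lemma coad0r x : c x 0 = 0. Proof. exact: lin0 (coad_linr x). Qed.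
Lemma coadDl x y a : c (x + y) a = c x a + c y a. Proof. exact: linD (coad_linl a) x y. Qed.
Lemma coadDr x a b : c x (a + b) = c x a + c x b. Proof. exact: linD (coad_linr x) a b. Qed.
Lemma coadNl x a : c (- x) a = - c x a. Proof. exact: linN (coad_linl a) x. Qed.
Lemma coadNr x a : c x (- a) = - c x a. Proof. exact: linN (coad_linr x) a. Qed.
Lemma coadZl k x a : c (k *: x) a = k *: c x a. Proof. exact: linZ (coad_linl a) k x. Qed.
Lemma coadZr k x a : c x (k *: a) = k *: c x a. Proof. exact: linZ (coad_linr x) k a. Qed.

Lemma pairing_br_phi u y b : pairing (br u (phi y)) b = pairing u (c y b).
Proof.
by rewrite [RHS]pairingC pairing_coad (br_anti HL (phi y)) pairingNr opprK pairingC.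
Qed.

Variable psi : V -> V.
Hypotheses (WI : weakly_involutive br phi) (adj : adjoint phi psi).

Lemma pairing_coad_adj a x b : pairing (c a (psi x)) b = - pairing (c b x) a.
Proof.
rewrite !pairing_coad (adjointC adj) (phi_br HL) WI opprK.
by rewrite (br_anti HL) pairingNr opprK.
Qed.

Lemma coad_phi x a : c (phi x) (psi a) = psi (c x a).
Proof.
apply: pairing_inj => y.
by rewrite pairing_coad WI !(adjointC adj) pairing_coad (phi_br HL).
Qed.

Lemma coad_br x y a : c (br x y) (psi a) = c (phi x) (c y a) - c (phi y) (c x a).
Proof.
apply: pairing_inj => z.
have jac : br (br x y) (phi z) = br (phi x) (br y z) + br (phi y) (br z x).
  by apply/esym/eqP; rewrite (br_anti HL (br x y)) -addr_eq0 (br_jacobi HL).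
rewrite pairingDl pairingNl !pairing_coad !WI (adjointC adj) (phi_br HL) WI jac.
by rewrite (br_anti HL z x) (brNr HL) !(pairingDr, pairingNr); ring.
Qed.

Lemma coad_rep : linear psi -> HomLieRep br phi psi c.
Proof.
move=> psi_lin; split=> [k a b | k x y a | k x a b | x a | x y a].
- exact: psi_lin k a b.
- exact: coad_linl a k x y.
- exact: coad_linr x k a b.
- exact: coad_phi.
- exact: coad_br.
Qed.

End Coadjoint.

Lemma addrACA3 (V : nmodType) (a a' b b' c c' : V) :
  (a + a') + (b + b') + (c + c') = (a + b + c) + (a' + b' + c').
Proof. by rewrite (addrACA a) (addrACA (a + b)). Qed.

Section PairArith.
Variables (R : pzRingType) (U W : lmodType R).

Lemma pair_addE (u v : U * W) : u + v = (u.1 + v.1, u.2 + v.2). Proof. by []. Qed.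
Lemma pair_oppE (u : U * W) : - u = (- u.1, - u.2). Proof. by []. Qed.
Lemma pair_scaleE k (u : U * W) : k *: u = (k *: u.1, k *: u.2). Proof. by []. Qed.
Lemma pair_split (x : U) (a : W) : (x, a) = (x, 0) + (0, a).
Proof. by rewrite pair_addE /= addr0 add0r. Qed.

End PairArith.

Section DoubleDefs.
Variables (K : fieldType) (n : nat).
Local Notation V := 'rV[K]_n.
Variables (br : V -> V -> V) (phi : V -> V) (brd : V -> V -> V) (psi : V -> V).
Local Notation c := (coad br phi).
Local Notation cd := (coad brd psi).

(* <Delta [x, y] - ad_(phi x) Delta y + ad_(phi y) Delta x, a (x) b>. *)
Definition compat_form x y a b : K :=
  pairing (br x y) (brd a b) + pairing (cd a x) (c y b) - pairing (cd a y) (c x b)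
  - pairing (cd b x) (c y a) + pairing (cd b y) (c x a).

Definition matched_defect x y a : V :=
  cd (psi a) (br x y) - (br (cd a x) (phi y) + br (phi x) (cd a y)
                         + cd (c y a) (phi x) - cd (c x a) (phi y)).

Definition double_br (u v : V * V) : V * V :=
  (br u.1 v.1 + cd u.2 v.1 - cd v.2 u.1, brd u.2 v.2 + c u.1 v.2 - c v.1 u.2).

Definition double_phi (u : V * V) : V * V := (phi u.1, psi u.2).

Definition double_jacobiator u v w : V * V :=
  double_br (double_phi u) (double_br v w) + double_br (double_phi v) (double_br w u)
  + double_br (double_phi w) (double_br u v).

End DoubleDefs.

Section Exchange.
Variables (K : fieldType) (n : nat).
Local Notation V := 'rV[K]_n.
Variables (br : V -> V -> V) (phi : V -> V) (brd : V -> V -> V) (psi : V -> V).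

Definition matched_compatible : Prop :=
  (forall x y a, matched_defect br phi brd psi x y a = 0) /\
  (forall a b x, matched_defect brd psi br phi a b x = 0).

Definition swap_pair (u : V * V) : V * V := (u.2, u.1).

Lemma compat_form_swap x y a b :
  compat_form br phi brd psi x y a b = compat_form brd psi br phi a b x y.
Proof. by rewrite /compat_form (pairingC (brd a b)) !(pairingC (coad br phi _ _)); ring. Qed.

Lemma double_jacobiator_swap u v w :
  double_jacobiator br phi brd psi u v w
  = swap_pair (double_jacobiator brd psi br phi (swap_pair u) (swap_pair v) (swap_pair w)).
Proof. by []. Qed.

End Exchange.

(* Identities between row vectors, checked as ring identities in K after
   pairing both sides with an arbitrary vector. *)
Ltac pairing_ring :=
  apply: pairing_inj => ?; rewrite ?(pairingDl, pairingNl, pairingZl, pairing0l); ring.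

Section Double.
Variables (K : fieldType) (n : nat).
Local Notation V := 'rV[K]_n.
Variables (br : V -> V -> V) (phi : V -> V) (brd : V -> V -> V) (psi : V -> V).
Hypotheses (HL : HomLie br phi) (WI : weakly_involutive br phi).
Hypotheses (HLd : HomLie brd psi) (WId : weakly_involutive brd psi).
Hypothesis adj : adjoint phi psi.
Local Notation c := (coad br phi).
Local Notation cd := (coad brd psi).
Local Notation Q := (compat_form br phi brd psi).
Local Notation D := (matched_defect br phi brd psi).
Local Notation N := (double_br br phi brd psi).
Local Notation P := (double_phi phi psi).
Local Notation J := (double_jacobiator br phi brd psi).

Lemma matched_defect_pairing x y a b : pairing (D x y a) b = - Q x y a b.
Proof.
rewrite /matched_defect !(pairingDl, pairingNl) !(pairing_coad_adj HLd WId (adjointC adj)).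
rewrite (br_anti HL (phi x) (cd a y)) pairingNl !(pairing_br_phi HL) (pairing_coad HLd) WId.
by rewrite /compat_form; ring.
Qed.

Lemma matched_defect_eq0 : (forall x y a, D x y a = 0) <-> (forall x y a b, Q x y a b = 0).
Proof.
split=> [D0 x y a b | Q0 x y a].
  by apply/eqP; rewrite -oppr_eq0 -matched_defect_pairing D0 pairing0l.
by apply: pairing_inj => b; rewrite matched_defect_pairing Q0 oppr0 pairing0l.
Qed.

Lemma double_br_g x p q : N (x, 0) (p, q) = (br x p - cd q x, c x q).
Proof. by rewrite /double_br /= (coad0l HLd) (br0l HLd) (coad0r HL) addr0 add0r subr0. Qed.

Lemma double_br_d a p q : N (0, a) (p, q) = (cd a p, brd a q - c p a).
Proof. by rewrite /double_br /= (br0l HL) (coad0r HLd) (coad0l HL) add0r addr0 subr0. Qed.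

Lemma double_phi_g x : P (x, 0) = (phi x, 0).
Proof. by rewrite /double_phi /= (phi0 HLd). Qed.

Lemma double_phi_d a : P (0, a) = (0, psi a).
Proof. by rewrite /double_phi /= (phi0 HL). Qed.

Lemma jacobiator_ggd x y a : J (x, 0) (y, 0) (0, a) = (D x y a, 0).
Proof.
rewrite /double_jacobiator !double_phi_g double_phi_d.
rewrite (double_br_g y) (double_br_d a x) (double_br_g x y) !double_br_g double_br_d.
rewrite (br0r HL) (coad0r HL) !(br0r HLd) (coad0l HLd) !sub0r !subr0.
rewrite (brNr HL) (coadNl HLd) (coadNr HL) !pair_addE /=; congr pair.
  by rewrite /matched_defect (br_anti HL (phi y)); pairing_ring.
by rewrite (coad_br HL WI adj); pairing_ring.
Qed.

Lemma jacobiator_ggg x y z : J (x, 0) (y, 0) (z, 0) = 0.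
Proof.
rewrite /double_jacobiator !double_phi_g !double_br_g !pair_addE /=.
by rewrite !(br0l HLd, coad0l HLd, coad0r HL, subr0, add0r, addr0) (br_jacobi HL).
Qed.

Lemma double_brDl u u' v : N (u + u') v = N u v + N u' v.
Proof.
case: u u' v => [x a] [x' a'] [y b]; rewrite /double_br !pair_addE /=; congr pair.
  by rewrite (brDl HL) (coadDl HLd) (coadDr HLd); pairing_ring.
by rewrite (brDl HLd) (coadDl HL) (coadDr HL); pairing_ring.
Qed.

Lemma double_brZl k u v : N (k *: u) v = k *: N u v.
Proof.
case: u v => [x a] [y b]; rewrite /double_br !pair_scaleE /=; congr pair.
  by rewrite (brZl HL) (coadZl HLd) (coadZr HLd); pairing_ring.
by rewrite (brZl HLd) (coadZl HL) (coadZr HL); pairing_ring.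
Qed.

Lemma double_br_anti u v : N u v = - N v u.
Proof.
case: u v => [x a] [y b]; rewrite /double_br pair_oppE /=; congr pair.
  by rewrite (br_anti HL x); pairing_ring.
by rewrite (br_anti HLd a); pairing_ring.
Qed.

Lemma double_brDr u v v' : N u (v + v') = N u v + N u v'.
Proof. by rewrite double_br_anti double_brDl opprD -!double_br_anti. Qed.

Lemma double_phiD u u' : P (u + u') = P u + P u'.
Proof. by rewrite /double_phi !pair_addE /= (phiD HL) (phiD HLd). Qed.

Lemma jacobiator_cycle u v w : J u v w = J v w u.
Proof. by rewrite /double_jacobiator -addrA addrC. Qed.

Lemma jacobiatorDl u u' v w : J (u + u') v w = J u v w + J u' v w.
Proof.
rewrite /double_jacobiator double_phiD !(double_brDl, double_brDr).
exact: addrACA3.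
Qed.

Lemma jacobiatorDm u v v' w : J u (v + v') w = J u v w + J u v' w.
Proof. by rewrite !(jacobiator_cycle u) jacobiatorDl. Qed.

Lemma jacobiatorDr u v w w' : J u v (w + w') = J u v w + J u v w'.
Proof. by rewrite !(jacobiator_cycle u v) jacobiatorDm. Qed.

End Double.

Arguments jacobiator_cycle {K n br phi brd psi} u v w.

Section DoubleLie.
Variables (K : fieldType) (n : nat).
Local Notation V := 'rV[K]_n.
Variables (br : V -> V -> V) (phi : V -> V) (brd : V -> V -> V) (psi : V -> V).
Hypotheses (HL : HomLie br phi) (WI : weakly_involutive br phi).
Hypotheses (HLd : HomLie brd psi) (WId : weakly_involutive brd psi).
Hypothesis adj : adjoint phi psi.
Local Notation c := (coad br phi).
Local Notation cd := (coad brd psi).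
Local Notation Q := (compat_form br phi brd psi).
Local Notation N := (double_br br phi brd psi).
Local Notation P := (double_phi phi psi).
Local Notation J := (double_jacobiator br phi brd psi).
Local Notation B := (@standard_form K n).

Let adjd : adjoint psi phi := adjointC adj.

Lemma jacobiator_gdd x a b : J (x, 0) (0, a) (0, b) = (0, matched_defect brd psi br phi a b x).
Proof. by rewrite double_jacobiator_swap jacobiator_cycle (jacobiator_ggd HLd WId HL adjd). Qed.

Lemma jacobiator_ddd a b d : J (0, a) (0, b) (0, d) = 0.
Proof. by rewrite double_jacobiator_swap (jacobiator_ggg HLd HL). Qed.

Lemma double_jacobi u v w : matched_compatible br phi brd psi -> J u v w = 0.
Proof.
(* By multilinearity and cyclicity, only the cases (g, g, g), (g, g, g^* ),
   (g, g^*, g^* ) and (g^*, g^*, g^* ) remain. *)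
case=> D0 D0'; case: u v w => [x a] [y b] [z d].
have ggd p q e : J (p, 0) (q, 0) (0, e) = 0 by rewrite (jacobiator_ggd HL WI HLd adj) D0.
have gdd p e f : J (p, 0) (0, e) (0, f) = 0 by rewrite jacobiator_gdd D0'.
rewrite (pair_split x) (pair_split y) (pair_split z).
rewrite !(jacobiatorDl HL HLd, jacobiatorDm HL HLd, jacobiatorDr HL HLd).
rewrite (jacobiator_ggg HL HLd) jacobiator_ddd !(jacobiator_cycle (0, a)).
rewrite (jacobiator_cycle (0, b)) -(jacobiator_cycle (z, 0)).
by rewrite !ggd !gdd !addr0.
Qed.

Lemma double_phi_br u v : P (N u v) = N (P u) (P v).
Proof.
case: u v => [x a] [y b]; rewrite /double_br /double_phi /=; congr pair.
  by rewrite (phiD HL) (phiN HL) (phiD HL) (phi_br HL) !(coad_phi HLd WId adjd).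
by rewrite (phiD HLd) (phiN HLd) (phiD HLd) (phi_br HLd) !(coad_phi HL WI adj).
Qed.

Lemma double_homlie : matched_compatible br phi brd psi -> HomLie N P.
Proof.
move=> MC; split.
- split=> k u v w; first by rewrite (double_brDl HL HLd) (double_brZl HL HLd).
  rewrite (double_brDr HL HLd) (double_br_anti HL HLd u) (double_brZl HL HLd).
  by rewrite -scalerN -(double_br_anti HL HLd).
- exact: double_br_anti.
- move=> k [x a] [y b]; rewrite /double_phi !pair_addE !pair_scaleE /=.
  by rewrite (phiD HL) (phiZ HL) (phiD HLd) (phiZ HLd).
- exact: double_phi_br.
- by move=> u v w; apply: double_jacobi.
Qed.

Lemma standard_form_invariant u v w : B (N u v) w = B u (N (P v) w).
Proof.
case: u v w => [x a] [y b] [z d]; rewrite /standard_form /double_br /double_phi /=.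
rewrite !(pairingDl, pairingNl, pairingDr, pairingNr).
rewrite !(pairingC z (c _ _)) !(pairingC x (c _ _)).
rewrite !(pairing_coad HL) !(pairing_coad HLd) !WI !WId.
rewrite (br_anti HL y x) (adjointC adj) (phi_br HL) WI (br_anti HL z) (br_anti HLd b a).
rewrite adj (phi_br HLd) WId (br_anti HLd d) !(pairingNl, pairingNr).
by rewrite (pairingC d) (pairingC (br (phi y) z)); ring.
Qed.

Lemma standard_form_nondeg u : (forall v, B u v = 0) -> u = 0.
Proof.
case: u => x a uB0; congr pair; apply: pairing_inj => v; rewrite pairing0l.
  by have := uB0 (0, v); rewrite /standard_form /= pairing0l addr0.
by have := uB0 (v, 0); rewrite /standard_form /= pairing0r add0r pairingC.
Qed.

Lemma double_manin : matched_compatible br phi brd psi -> manin_triple br phi brd psi N P B.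
Proof.
move=> MC; split.
- by split.
- exact: double_homlie.
- split.
  + by move=> k u v w; rewrite /standard_form /= pairingDl pairingZl pairingDr pairingZr; ring.
  + split; last by move=> u v; rewrite /standard_form addrC.
    by move=> k u v w; rewrite /standard_form /= pairingDl pairingZl pairingDr pairingZr; ring.
  + exact: standard_form_nondeg.
  + exact: standard_form_invariant.
  + by move=> u v; rewrite /standard_form /double_phi /= !adj.
- split.
  + by move=> x y; rewrite /standard_form /= !pairing0r addr0.
  + by move=> x y; rewrite (double_br_g HL HLd) (coad0r HL) (coad0l HLd) subr0.
  + by move=> x; rewrite (double_phi_g phi HLd).
- split.
  + by move=> a b; rewrite /standard_form /= !pairing0l addr0.
  + by move=> a b; rewrite (double_br_d HL HLd) (coad0r HLd) (coad0l HL) subr0.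
  + by move=> a; rewrite (double_phi_d psi HL).
Qed.

Section ManinConverse.
Variables (brk : V * V -> V * V -> V * V) (phik : V * V -> V * V).
Hypothesis MT : manin_triple br phi brd psi brk phik B.

Let HLk : HomLie brk phik. Proof. by case: MT. Qed.
Let B_invariant u v w : B (brk u v) w = B u (brk (phik v) w).
Proof. by case: MT => _ _ [] _ _ _ ->. Qed.
Let brk_g x y : brk (x, 0) (y, 0) = (br x y, 0). Proof. by case: MT => _ _ _ [] _ ->. Qed.
Let brk_d a b : brk (0, a) (0, b) = (0, brd a b). Proof. by case: MT => _ _ _ _ [] _ ->. Qed.
Let phik_g x : phik (x, 0) = (phi x, 0). Proof. by case: MT => _ _ _ [] _ _ ->. Qed.
Let phik_d a : phik (0, a) = (0, psi a). Proof. by case: MT => _ _ _ _ [] _ _ ->. Qed.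

Lemma manin_twistE u : phik u = P u.
Proof.
case: u => x a; rewrite [in LHS](pair_split x) (phiD HLk) phik_g phik_d.
by rewrite pair_addE /= addr0 add0r.
Qed.

Lemma manin_br_gd x a : brk (x, 0) (0, a) = (- cd a x, c x a).
Proof.
rewrite [LHS]surjective_pairing; congr pair; apply: pairing_inj => t.
  have := B_invariant (x, 0) (0, a) (0, t).
  rewrite phik_d brk_d /standard_form /= pairing0l pairing0r !addr0 => ->.
  by rewrite pairingNl (pairing_coad HLd) opprK.
have := B_invariant (0, a) (x, 0) (t, 0).
rewrite phik_g brk_g (br_anti HLk) /standard_form /= pairing0l pairing0r !add0r.
by rewrite pairingNr (pairing_coad HL) (pairingC a) (pairingC t) => <-; rewrite opprK.
Qed.

Lemma manin_brE u v : brk u v = N u v.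
Proof.
case: u v => [x a] [y b].
rewrite [in LHS](pair_split x) [in LHS](pair_split y) !(brDl HLk, brDr HLk).
rewrite brk_g brk_d !manin_br_gd.
rewrite (br_anti HLk (0, a)) manin_br_gd /double_br !pair_addE !pair_oppE /=.
by congr pair; pairing_ring.
Qed.

Lemma manin_jacobiator u v w : J u v w = 0.
Proof. by rewrite /double_jacobiator -!manin_brE -!manin_twistE (br_jacobi HLk). Qed.

Lemma manin_compatible : matched_compatible br phi brd psi.
Proof.
split=> [x y a | a b x].
  have := manin_jacobiator (x, 0) (y, 0) (0, a).
  by rewrite (jacobiator_ggd HL WI HLd adj) => -[].
by have := manin_jacobiator (x, 0) (0, a) (0, b); rewrite jacobiator_gdd => -[].
Qed.

End ManinConverse.

Lemma manin_triple_iff_compatible :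
  (exists brk phik, manin_triple br phi brd psi brk phik B) <-> matched_compatible br phi brd psi.
Proof.
split=> [[brk [phik MT]] | MC]; first exact: manin_compatible MT.
by exists N, P; apply: double_manin.
Qed.

Lemma matched_pair_iff_compatible :
  matched_pair br phi brd psi c cd <-> matched_compatible br phi brd psi.
Proof.
split=> [[_ _ _ _ [comp comp']] | [D0 D0']].
  by split=> *; apply/eqP; rewrite subr_eq0; apply/eqP; [apply: comp | apply: comp'].
split=> //; first exact (coad_rep HL WI adj (phi_lin HLd)).
  exact (coad_rep HLd WId adjd (phi_lin HL)).
by split=> *; apply/eqP; rewrite -subr_eq0; apply/eqP; [apply: D0 | apply: D0'].
Qed.

Lemma compatible_iff_compat : matched_compatible br phi brd psi <-> forall x y a b, Q x y a b = 0.
Proof.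
split=> [[D0 _] | Q0]; first exact/(matched_defect_eq0 HL HLd WId adj).
split; first exact/(matched_defect_eq0 HL HLd WId adj).
by apply/(matched_defect_eq0 HLd HL WI adjd) => a b x y; rewrite -compat_form_swap.
Qed.

End DoubleLie.

Section Bialgebra.
Variables (K : fieldType) (n : nat).
Local Notation V := 'rV[K]_n.
Local Notation ev := (ev K).
Variables (br : V -> V -> V) (phi : V -> V) (brd : V -> V -> V) (psi : V -> V).
Hypotheses (HL : HomLie br phi) (HLd : HomLie brd psi) (adj : adjoint phi psi).
Local Notation c := (coad br phi).
Local Notation cd := (coad brd psi).
Local Notation Q := (compat_form br phi brd psi).

Lemma compat_form_scalarl x y b : scalar (Q x y ^~ b).
Proof.
move=> k a a' /=; rewrite /compat_form (brDl HLd) (brZl HLd).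
rewrite !(coadDl HLd) !(coadZl HLd) !(coadDr HL) !(coadZr HL).
by rewrite !(pairingDl, pairingZl, pairingDr, pairingZr); ring.
Qed.

Lemma compat_form_anti x y a b : Q x y a b = - Q x y b a.
Proof. by rewrite /compat_form (br_anti HLd a) pairingNr; ring. Qed.

Lemma compat_form_ev0 x y :
  (forall k l, Q x y (ev k) (ev l) = 0) -> forall a b, Q x y a b = 0.
Proof.
move=> Q0 a b; rewrite (scalar_expand (compat_form_scalarl x y b)) big1 // => k _.
rewrite compat_form_anti (scalar_expand (compat_form_scalarl x y (ev k))).
by rewrite big1 ?oppr0 ?mulr0 // => l _; rewrite Q0 mulr0.
Qed.

Lemma tensor_map_cobracket f h y k l :
  tensor_map f h (cobracket brd y) k l
  = pairing y (brd (\row_i f (ev i) 0 k) (\row_j h (ev j) 0 l)).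
Proof.
set F := \row_i _; set H := \row_j _.
have brd_scalarl : scalar (fun a => pairing y (brd a H)).
  by move=> t u v /=; rewrite (brDl HLd) (brZl HLd) pairingDr pairingZr.
rewrite (scalar_expand brd_scalarl) /tensor_map summxE; apply: eq_bigr => i _.
have brd_scalarr : scalar (fun b => pairing y (brd (ev i) b)).
  by move=> t u v /=; rewrite (brDr HLd) (brZr HLd) pairingDr pairingZr.
rewrite (scalar_expand brd_scalarr) summxE mulr_sumr; apply: eq_bigr => j _.
by rewrite !mxE big_ord1 !mxE; ring.
Qed.

Lemma row_br_phi_ev x k : \row_i br (phi x) (ev i) 0 k = - c x (ev k).
Proof. by apply/rowP => i; rewrite !mxE opprK -pairing_ev pairingC. Qed.

Lemma row_phi_ev l : \row_j phi (ev j) 0 l = psi (ev l).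
Proof. by apply/rowP => j; rewrite mxE -pairing_ev adj pairingC pairing_ev. Qed.

Lemma bialgebra_defect_entry x y k l :
  (cobracket brd (br x y)
   - (ad_tensor br phi (phi x) (cobracket brd y)
      - ad_tensor br phi (phi y) (cobracket brd x))) k l
  = Q x y (ev k) (ev l).
Proof.
rewrite /ad_tensor !mxE !tensor_map_cobracket !row_br_phi_ev !row_phi_ev.
rewrite /compat_form !(pairing_coad HLd) !(brNl HLd, brNr HLd).
by rewrite (br_anti HLd (c x _)) (br_anti HLd (c y _)) !pairingNr; ring.
Qed.

Lemma bialgebra_iff_compat :
  hom_lie_bialgebra br phi brd <-> forall x y a b, Q x y a b = 0.
Proof.
split=> [bialg x y | Q0 x y].
  by apply: compat_form_ev0 => k l; rewrite -bialgebra_defect_entry bialg subrr mxE.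
apply/eqP; rewrite -subr_eq0; apply/eqP/matrixP => k l.
by rewrite bialgebra_defect_entry Q0 mxE.
Qed.

End Bialgebra.

Unset Implicit Arguments. Set Strict Implicit. Set Printing Implicit Defensive.

Theorem theorem3p12 (K : fieldType) (n : nat)
    (br : 'rV[K]_n -> 'rV[K]_n -> 'rV[K]_n) (phi : 'rV[K]_n -> 'rV[K]_n)
    (brd : 'rV[K]_n -> 'rV[K]_n -> 'rV[K]_n) :
  HomLie br phi -> weakly_involutive br phi ->
  HomLie brd (dual_map phi) -> weakly_involutive brd (dual_map phi) ->
  [/\ hom_lie_bialgebra br phi brd <->
        matched_pair br phi brd (dual_map phi) (coad br phi) (coad_dual phi brd),
      matched_pair br phi brd (dual_map phi) (coad br phi) (coad_dual phi brd) <->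
        (exists (brk : ('rV[K]_n * 'rV[K]_n)%type -> ('rV[K]_n * 'rV[K]_n)%type
                        -> ('rV[K]_n * 'rV[K]_n)%type)
                (phik : ('rV[K]_n * 'rV[K]_n)%type -> ('rV[K]_n * 'rV[K]_n)%type),
           manin_triple br phi brd (dual_map phi) brk phik (@standard_form K n)) &
      hom_lie_bialgebra br phi brd <->
        (exists (brk : ('rV[K]_n * 'rV[K]_n)%type -> ('rV[K]_n * 'rV[K]_n)%type
                        -> ('rV[K]_n * 'rV[K]_n)%type)
                (phik : ('rV[K]_n * 'rV[K]_n)%type -> ('rV[K]_n * 'rV[K]_n)%type),
           manin_triple br phi brd (dual_map phi) brk phik (@standard_form K n))].
Proof.
move=> HL WI HLd WId.
have adj := dual_map_adjoint (phi_lin HL).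
have bialg_compat := bialgebra_iff_compat HL HLd adj.
(* [coad_dual phi brd] unfolds to [coad brd (dual_map phi)]. *)
have matched_compat : matched_pair br phi brd (dual_map phi) (coad br phi) (coad_dual phi brd)
    <-> matched_compatible br phi brd (dual_map phi).
  exact: matched_pair_iff_compatible HL WI HLd WId adj.
have manin_compat := manin_triple_iff_compatible HL WI HLd WId adj.
have compat := compatible_iff_compat HL WI HLd WId adj.
split.
- by rewrite bialg_compat matched_compat compat.
- by rewrite matched_compat manin_compat.
- by rewrite bialg_compat manin_compat compat.
Qed.
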